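(* Let $\mathbb{H}$ be a connected $k$-regular $r$-uniform simple hypergraph on $n\ge 2$ vertices, and let $\mu_1$ be the second largest eigenvalue of its adjacency matrix. Then $$k-\mu_1 < 2k(r-1)\,\lambda(\mathbb{H})\sqrt{\frac{n}{\lfloor n/2\rfloor}}.$$
   Context: A hypergraph $\mathbb{H}=(V,E)$ is $r$-uniform if every edge has exactly $r$ vertices, and $k$-regular if every vertex lies in exactly $k$ edges. The adjacency matrix of $\mathbb{H}$ with vertices $v_1,\dots,v_n$ is the $n\times n$ matrix whose $(i,j)$ entry is $1$ if $i\neq j$ and $v_i,v_j$ lie in a common edge, and $0$ otherwise; its eigenvalues are $\mu_0\ge\mu_1\ge\cdots\ge\mu_{n-1}$. For non-negative integers $h>k$, an $L(h,k)$-colouring of $\mathbb{H}$ is a map $f:V\to\mathbb{Z}_{\ge 0}$ such that $|f(u)-f(v)|\ge h$ whenever $u\ne v$ lie in a common edge, and $|f(u)-f(v)|\ge k$ whenever there are edges $e_1\ni v$, $e_2\ni u$ with $(e_1\cap e_2)\setminus\{u,v\}\ne\emptyset$. The span is $\max f-\min f$; $\lambda_{h,k}(\mathbb{H})$ is the minimum span and $\lambda(\mathbb{H})=\lambda_{2,1}(\mathbb{H})$. *)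

From HB Require Import structures.
From mathcomp Require Import all_boot all_order all_algebra.
From mathcomp Require Import reals.
Set Implicit Arguments. Unset Strict Implicit. Unset Printing Implicit Defensive.
Import Order.TTheory GRing.Theory Num.Theory.

(* A hypergraph on the vertex set 'I_n is given by its edge set
   E : {set {set 'I_n}} (a set of edges, so no repeated edges). *)

Section Hypergraph.
Variable n : nat.
Variable E : {set {set 'I_n}}.

Definition uniform (r : nat) : Prop := forall e, e \in E -> #|e| = r.

Definition regular (k : nat) : Prop :=
  forall v : 'I_n, #|[set e in E | v \in e]| = k.

Definition hadj : rel 'I_n :=
  fun u v => (u != v) && [exists e in E, (u \in e) && (v \in e)].

Definition hconnected : Prop := forall u v : 'I_n, connect hadj u v.

Definition adjmx (R : nzRingType) : 'M[R]_n :=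
  \matrix_(i, j) ((hadj i j)%:R)%R.

Definition Lhk_colouring (h k : nat) (f : 'I_n -> nat) : Prop :=
  (forall u v : 'I_n, u != v ->
     (exists2 e, e \in E & (u \in e) && (v \in e)) ->
     (h <= `|(Posz (f u) - Posz (f v))%R|)%N) /\
  (forall u v : 'I_n, u != v ->
     (exists e1, exists e2, [/\ e1 \in E, e2 \in E, v \in e1, u \in e2 &
        (e1 :&: e2) :\: [set u; v] != set0]) ->
     (k <= `|(Posz (f u) - Posz (f v))%R|)%N).

(* span = max f - min f, written as the maximal difference f i - f j *)
Definition span (f : 'I_n -> nat) : nat :=
  \max_(i : 'I_n) \max_(j : 'I_n) (f i - f j)%N.

Definition is_lambda_hk (h k lam : nat) : Prop :=
  (exists f, Lhk_colouring h k f /\ span f = lam) /\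
  (forall f, Lhk_colouring h k f -> (lam <= span f)%N).

Definition is_lambda (lam : nat) : Prop := is_lambda_hk 2 1 lam.

End Hypergraph.

(* mu is the list of eigenvalues (with multiplicity) of the square matrix A,
   sorted in nonincreasing order: mu_0 >= mu_1 >= ... *)
Definition sorted_spectrum (R : realType) (n : nat) (A : 'M[R]_n) (mu : seq R)
  : Prop :=
  [/\ size mu = n, sorted (fun x y => y <= x)%R mu &
      char_poly A = \prod_(x <- mu) ('X - x%:P)]%R.

From Pilot Require Import Defs.
From HB Require Import structures.
From mathcomp Require Import all_boot all_order all_algebra.
From mathcomp Require Import reals.
From mathcomp Require Import ring lra.
Set Implicit Arguments. Unset Strict Implicit. Unset Printing Implicit Defensive.
Import Order.TTheory GRing.Theory Num.Theory.
Local Open Scope ring_scope.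

(* The bound follows from crude estimates on both sides; no spectral gap
   information is needed.

   Left-hand side: every eigenvalue of a matrix is bounded in absolute value
   by its largest absolute column sum.  A column of the adjacency matrix sums
   to the number of neighbours of a vertex, which is at most k(r-1) since the
   vertex lies in k edges of r vertices.  Hence mu_1 >= -k(r-1) and
   k - mu_1 <= k + k(r-1) <= 2k(r-1).

   Right-hand side: a connected hypergraph on n >= 2 vertices has an edge
   containing two distinct vertices, so r >= 2 and k >= 1; an L(2,1)-colouring
   separates these two vertices by 2, so lambda >= 2; and
   n / floor(n/2) >= 1.  Hence the right-hand side is >= 4k(r-1) > 2k(r-1). *)

(* Spectral estimate: an eigenvalue is bounded by the largest absolute
   column sum (take a left eigenvector and look at its largest entry). *)
Lemma eigenvalue_norm_le_colsum (R : realFieldType) (n : nat) (A : 'M[R]_n)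
    (a c : R) :
  (forall j, \sum_i `|A i j| <= c) -> eigenvalue A a -> `|a| <= c.
Proof.
move=> colA /eigenvalueP[v eig_v v_neq0].
have [j0 vj0_neq0] : exists j0, v 0 j0 != 0.
  apply/existsP; apply: contraNT v_neq0 => /existsPn v0.
  by apply/eqP/rowP => i; rewrite mxE; apply/eqP/negPn/v0.
pose j := Order.arg_max j0 xpredT (fun j => `|v 0 j|).
have vj_max i : `|v 0 i| <= `|v 0 j|.
  by rewrite /j; case: arg_maxP => // m _; apply.
have vj_gt0 : 0 < `|v 0 j| by apply: lt_le_trans (vj_max j0); rewrite normr_gt0.
have eig_j : a * v 0 j = \sum_i v 0 i * A i j.
  by have := congr1 (fun M : 'M[R]_(1, n) => M 0 j) eig_v; rewrite !mxE => <-.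
rewrite -(ler_pM2r vj_gt0) -normrM eig_j.
apply: le_trans (ler_norm_sum _ _ _) _.
apply: (@le_trans _ _ (\sum_i `|v 0 j| * `|A i j|)).
  by apply: ler_sum => i _; rewrite normrM ler_wpM2r.
by rewrite -mulr_sumr mulrC ler_wpM2r.
Qed.

Lemma card_bigcup_le (T I : finType) (P : pred I) (F : I -> {set T}) :
  (#|\bigcup_(i | P i) F i| <= \sum_(i | P i) #|F i|)%N.
Proof.
elim/big_rec2: _ => [|i U m _ IH]; first by rewrite cards0.
by apply: leq_trans (leq_card_setU _ _) _; rewrite leq_add2l.
Qed.

Section Hypergraph.
Variables (n : nat) (E : {set {set 'I_n}}).

(* The neighbours of j lie in the sets e \ {j} for the edges e through j. *)
Lemma degree_le (r k : nat) (j : 'I_n) :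
  uniform E r -> regular E k -> (#|[set i | hadj E i j]| <= k * (r - 1))%N.
Proof.
move=> unifE regE.
have nbhd_sub : [set i | hadj E i j] \subset
    \bigcup_(e in [set e in E | j \in e]) (e :\ j).
  apply/subsetP => i; rewrite inE => /andP[nij /existsP[e /and3P[eE ie je]]].
  by apply/bigcupP; exists e; rewrite !inE ?eE ?ie ?nij.
apply: leq_trans (subset_leq_card nbhd_sub) _.
apply: leq_trans (card_bigcup_le _ _) _.
rewrite (eq_bigr (fun _ => r - 1)%N) ?sum_nat_const ?regE 1?mulnC //.
move=> e; rewrite inE => /andP[eE je].
by have := cardsD1 j e; rewrite je unifE // => ->; rewrite add1n subn1.
Qed.

Lemma adj_eigenvalue_ge (R : realFieldType) (r k : nat) (a : R) :
  uniform E r -> regular E k -> eigenvalue (adjmx E R) a ->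
  - (k * (r - 1))%N%:R <= a.
Proof.
move=> unifE regE eig_a; rewrite lerNl (le_trans (ler_norm _)) // normrN.
apply: eigenvalue_norm_le_colsum eig_a => j.
have -> : \sum_i `|adjmx E R i j| = #|[set i | hadj E i j]|%:R.
  rewrite -sum1_card natr_sum [RHS]big_mkcond /=.
  by apply: eq_bigr => i _; rewrite !mxE inE; case: hadj; rewrite ?normr1 ?normr0.
by rewrite ler_nat degree_le.
Qed.

Lemma connected_has_adjacent_pair :
  (2 <= n)%N -> hconnected E -> exists u v, hadj E u v.
Proof.
move=> n_ge2 connE.
have [n0 n1] : (0 < n)%N /\ (1 < n)%N by split; [apply: leq_trans n_ge2|].
have := connE (Ordinal n0) (Ordinal n1) => /connectP[[|z p]] /=.
  by move=> _ /(congr1 val).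
by move=> /andP[h _] _; exists (Ordinal n0), z.
Qed.

Lemma dist_le_span (f : 'I_n -> nat) (u v : 'I_n) :
  (`|(Posz (f u) - Posz (f v))%R| <= Defs.span f)%N.
Proof.
have diff_le a b : (f a - f b <= Defs.span f)%N.
  apply: (leq_trans (@leq_bigmax _ (fun j => f a - f j)%N b)).
  exact: (@leq_bigmax _ (fun i => \max_j (f i - f j))%N a).
case: (leqP (f u) (f v)) => h.
  by rewrite (distnEr h); apply: diff_le.
by rewrite (distnEl (ltnW h)); apply: diff_le.
Qed.

Lemma span_ge_of_adjacent (h k : nat) (f : 'I_n -> nat) (u v : 'I_n) :
  Lhk_colouring E h k f -> hadj E u v -> (h <= Defs.span f)%N.
Proof.
move=> [sep_adj _] /andP[nuv /existsP[e /and3P[eE ue ve]]].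
apply: leq_trans (dist_le_span f u v).
by apply: sep_adj nuv _; exists e; rewrite ?ue.
Qed.

Lemma adjacent_uniform_regular (r k : nat) (u v : 'I_n) :
  uniform E r -> regular E k -> hadj E u v -> (2 <= r)%N /\ (1 <= k)%N.
Proof.
move=> unifE regE /andP[nuv /existsP[e /and3P[eE ue ve]]]; split.
  rewrite -(unifE e eE); apply: (@leq_trans #|[set u; v]|).
    by rewrite cards2 nuv.
  by apply/subset_leq_card/subsetP => z; rewrite !inE => /orP[]/eqP->.
by rewrite -(regE u) card_gt0; apply/set0Pn; exists e; rewrite inE eE ue.
Qed.

End Hypergraph.

Lemma sqrt_ratio_half_ge1 (R : rcfType) (n : nat) :
  (2 <= n)%N -> 1 <= Num.sqrt (n%:R / (n./2)%:R) :> R.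
Proof.
move=> n_ge2; have half_gt0 : (0 < n./2)%N by rewrite -divn2 divn_gt0.
rewrite -[X in X <= _]sqrtr1 ler_sqrt ?divr_ge0 //.
by rewrite ler_pdivlMr ?ltr0n // mul1r ler_nat -divn2 leq_div.
Qed.

(* The final real inequality: K - m <= K + KQ <= 2KQ < 4KQ <= 2KQLs. *)
Lemma crude_gap_bound (R : realFieldType) (K Q L s m : R) :
  1 <= K -> 1 <= Q -> 2 <= L -> 1 <= s -> - (K * Q) <= m ->
  K - m < 2 * K * Q * L * s.
Proof.
move=> K1 Q1 L2 s1 mge.
have KQ1 : 1 <= K * Q by rewrite -[1]mulr1 ler_pM // ler01.
have Ls2 : 2 <= L * s by rewrite -[2]mulr1 ler_pM // ler0n.
have -> : 2 * K * Q * L * s = 2 * (K * Q) * (L * s) by ring.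
have : 2 * (K * Q) * 2 <= 2 * (K * Q) * (L * s) by rewrite ler_wpM2l //; lra.
have : K <= K * Q by rewrite -{1}[K]mulr1 ler_wpM2l //; lra.
lra.
Qed.

Theorem corollary2p5 (R : realType) (n r k : nat) (E : {set {set 'I_n}})
  (mu : seq R) (lam : nat) :
  (2 <= n)%N ->
  uniform E r -> regular E k -> hconnected E ->
  sorted_spectrum (adjmx E R) mu ->
  is_lambda E lam ->
  k%:R - mu`_1 <
    2 * k%:R * (r%:R - 1) * lam%:R * Num.sqrt (n%:R / (n./2)%:R).
Proof.
move=> n_ge2 unifE regE connE [size_mu _ char_mu] [[f [colf span_f]] _].
have [u [v adj_uv]] := connected_has_adjacent_pair n_ge2 connE.
have [r_ge2 k_ge1] := adjacent_uniform_regular unifE regE adj_uv.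
have lam_ge2 : (2 <= lam)%N by rewrite -span_f (span_ge_of_adjacent colf adj_uv).
have eig_mu1 : eigenvalue (adjmx E R) mu`_1.
  by rewrite eigenvalue_root_char char_mu root_prod_XsubC mem_nth // size_mu.
have mu1_ge := adj_eigenvalue_ge unifE regE eig_mu1.
rewrite natrM natrB ?(leq_trans _ r_ge2) // in mu1_ge.
apply: crude_gap_bound mu1_ge; rewrite ?ler1n ?ler_nat ?sqrt_ratio_half_ge1 //.
have : 2%:R <= r%:R :> R by rewrite ler_nat.
lra.
Qed.
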